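(* Let $x$ be a speedable number which is nearly computable. Then $x$ is regainingly approximable.
   Context: A left-computable real $x$ (i.e. limit of a computable non-decreasing sequence of rationals) is speedable if there exist $\rho\in(0,1)$ and a computable strictly increasing sequence of rationals $(x_n)_n$ converging to $x$ such that $\frac{x-x_{n+1}}{x-x_n}\le\rho$ for infinitely many $n\in\mathbb{N}$. A real $x$ is regainingly approximable if there is a computable non-decreasing sequence of rationals $(x_n)_n$ converging to $x$ with $x - x_n < 2^{-n}$ for infinitely many $n\in\mathbb{N}$. A function $f:\mathbb{N}\to\mathbb{N}$ is a modulus of convergence of a convergent sequence $(y_n)_n$ with limit $y$ if for all $n$ and all $m\ge f(n)$ we have $|y-y_m|<2^{-n}$; $(y_n)_n$ converges computably if it has a computable modulus of convergence. A sequence $(x_n)_n$ converges nearly computably if it converges and for every computable increasing function $s:\mathbb{N}\to\mathbb{N}$ the sequence $(x_{s(n+1)}-x_{s(n)})_n$ converges computably to $0$. A real is nearly computable if some computable sequence of rationals converges nearly computably to it. *)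

From Stdlib Require Import Reals List Arith.
Import ListNotations.
Open Scope R_scope.

Inductive code : Type :=
| CZero : code
| CSucc : code
| CProj : nat -> code                (* i-th argument (0 if absent) *)
| CComp : code -> list code -> code
| CPrimRec : code -> code -> code    (* primitive recursion on first argument *)
| CMu : code -> code.                (* least n with f (n :: v) = 0 *)

Inductive eval : code -> list nat -> nat -> Prop :=
| eval_zero : forall v, eval CZero v 0
| eval_succ : forall x v, eval CSucc (x :: v) (S x)
| eval_proj : forall i v, eval (CProj i) v (nth i v 0%nat)
| eval_comp : forall f gs v ws y,
    evals gs v ws -> eval f ws y -> eval (CComp f gs) v y
| eval_prec0 : forall f g v y, eval f v y -> eval (CPrimRec f g) (0%nat :: v) y
| eval_precS : forall f g n v z y,
    eval (CPrimRec f g) (n :: v) z -> eval g (n :: z :: v) y ->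
    eval (CPrimRec f g) (S n :: v) y
| eval_mu : forall f v n,
    eval f (n :: v) 0 ->
    (forall m, (m < n)%nat -> exists k, eval f (m :: v) (S k)) ->
    eval (CMu f) v n
with evals : list code -> list nat -> list nat -> Prop :=
| evals_nil : forall v, evals [] v []
| evals_cons : forall g gs v y ys,
    eval g v y -> evals gs v ys -> evals (g :: gs) v (y :: ys).

Definition computable_fun (f : nat -> nat) : Prop :=
  exists c : code, forall n, eval c [n] (f n).

Definition computable_rat_seq (q : nat -> R) : Prop :=
  exists a b c : nat -> nat,
    computable_fun a /\ computable_fun b /\ computable_fun c /\
    forall n, q n = (INR (a n) - INR (b n)) / INR (S (c n)).

Definition nondecreasing_seq (q : nat -> R) : Prop := forall n, q n <= q (S n).
Definition increasing_seq (q : nat -> R) : Prop := forall n, q n < q (S n).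
Definition increasing_nat_fun (s : nat -> nat) : Prop := forall n, (s n < s (S n))%nat.

Definition left_computable (x : R) : Prop :=
  exists q, computable_rat_seq q /\ nondecreasing_seq q /\ Un_cv q x.

Definition speedable (x : R) : Prop :=
  left_computable x /\
  exists rho : R, 0 < rho < 1 /\
  exists q, computable_rat_seq q /\ increasing_seq q /\ Un_cv q x /\
    forall N, exists n, (N <= n)%nat /\ (x - q (S n)) / (x - q n) <= rho.

Definition regainingly_approximable (x : R) : Prop :=
  exists q, computable_rat_seq q /\ nondecreasing_seq q /\ Un_cv q x /\
    forall N, exists n, (N <= n)%nat /\ x - q n < / 2 ^ n.

Definition is_modulus (y : nat -> R) (l : R) (f : nat -> nat) : Prop :=
  forall n m, (f n <= m)%nat -> Rabs (l - y m) < / 2 ^ n.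

Definition converges_computably_to (y : nat -> R) (l : R) : Prop :=
  Un_cv y l /\ exists f, computable_fun f /\ is_modulus y l f.

Definition converges_nearly_computably_to (q : nat -> R) (x : R) : Prop :=
  Un_cv q x /\
  forall s, computable_fun s -> increasing_nat_fun s ->
    converges_computably_to (fun n => q (s (S n)) - q (s n)) 0.

Definition nearly_computable (x : R) : Prop :=
  exists q, computable_rat_seq q /\ converges_nearly_computably_to q x.

From Stdlib Require Import Reals Lra Lia ConstructiveEpsilon List.
Import ListNotations.

(** Let [q] be a computable increasing approximation of [x] with infinitely
    many speed-up steps [x - q (j + 1) <= rho (x - q j)], and [p] a computable sequence
    converging nearly computably to [x].
    1. By unbounded search we computably pick a strictly increasing [h] with
       [|p (h n) - q (h n)| < 2^-n].
    2. Near computability along [h] gives a computable modulus [f] for the increments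
       [p (h (n + 1)) - p (h n)]; hence the increments of [q] along [h] are below
       [3 * 2^-k] from index [f k + k] on.
    3. A speed-up step [j] inside a block [h n <= j < h (n + 1)] forces
       [(1 - rho) (x - q (h n)) <= q (h (n + 1)) - q (h n)].
    4. With [3 * 2^-c < 1 - rho] and a computable increasing majorant [G] of
       [k |-> f (k + c) + k + c], the sequence [q (h (G (k + 1)))] is regaining. *)

Open Scope nat_scope.

Definition computes (c : code) (F : list nat -> nat) : Prop := forall v, eval c v (F v).

Definition computable_op (F : list nat -> nat) : Prop := exists c, computes c F.

Definition binop (P : nat -> nat -> nat) : list nat -> nat :=
  fun v => P (nth 0 v 0) (nth 1 v 0).

Lemma computable_op_ext F G : computable_op F -> (forall v, F v = G v) -> computable_op G.
Proof. intros [c Hc] E; exists c; intro v; rewrite <- E; apply Hc. Qed.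

Lemma computable_op_proj i : computable_op (fun v => nth i v 0).
Proof. exists (CProj i); intro v; constructor. Qed.

Lemma computable_op_succ G : computable_op G -> computable_op (fun v => S (G v)).
Proof.
  intros [g Hg]; exists (CComp CSucc [g]); intro v.
  econstructor; [constructor; [apply Hg | constructor] | constructor].
Qed.

Lemma computable_op_const k : computable_op (fun _ => k).
Proof.
  induction k as [|k IH].
  - exists CZero; intro v; constructor.
  - exact (computable_op_succ _ IH).
Qed.

Lemma computable_op_app f G : computable_fun f -> computable_op G -> computable_op (fun v => f (G v)).
Proof.
  intros [cf Hf] [g Hg]; exists (CComp cf [g]); intro v.
  econstructor; [constructor; [apply Hg | constructor] | apply Hf].
Qed.

Lemma computable_op_comp2 F G H : computable_op F -> computable_op G -> computable_op H ->
  computable_op (fun v => F [G v; H v]).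
Proof.
  intros [cf Hf] [g Hg] [h Hh]; exists (CComp cf [g; h]); intro v.
  econstructor; [repeat constructor; [apply Hg | apply Hh] | apply Hf].
Qed.

Lemma computable_op_app2 P G H : computable_op (binop P) -> computable_op G -> computable_op H ->
  computable_op (fun v => P (G v) (H v)).
Proof. exact (computable_op_comp2 (binop P) G H). Qed.

Fixpoint primrec (F G : list nat -> nat) (n : nat) (w : list nat) : nat :=
  match n with 0 => F w | S n' => G (n' :: primrec F G n' w :: w) end.

Lemma computable_op_primrec F G : computable_op F -> computable_op G ->
  computable_op (binop (fun n y => primrec F G n [y])).
Proof.
  intros [f Hf] [g Hg]; exists (CComp (CPrimRec f g) [CProj 0; CProj 1]); intro v.
  econstructor; [repeat constructor|].
  unfold binop; generalize (nth 0 v 0); intro n; induction n as [|n IH]; simpl.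
  - constructor; apply Hf.
  - econstructor; [apply IH | apply Hg].
Qed.

Lemma computable_op_add G H : computable_op G -> computable_op H -> computable_op (fun v => G v + H v).
Proof.
  apply computable_op_app2; eapply computable_op_ext.
  - apply (computable_op_primrec (fun w => nth 0 w 0) (fun w => S (nth 1 w 0)));
      [apply computable_op_proj | apply computable_op_succ, computable_op_proj].
  - intro v; unfold binop; generalize (nth 0 v 0); induction n; simpl; auto.
Qed.

Lemma computable_op_mul G H : computable_op G -> computable_op H -> computable_op (fun v => G v * H v).
Proof.
  apply computable_op_app2; eapply computable_op_ext.
  - apply (computable_op_primrec (fun _ => 0) (fun w => nth 1 w 0 + nth 2 w 0));
      [apply computable_op_const | apply computable_op_add; apply computable_op_proj].
  - intro v; unfold binop; generalize (nth 0 v 0); induction n; simpl; lia.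
Qed.

Lemma computable_op_sub G H : computable_op G -> computable_op H -> computable_op (fun v => G v - H v).
Proof.
  (* [m - n] is [m] after [n] predecessor steps; the predecessor is itself a recursion. *)
  assert (Hpred : computable_op (fun w => pred (nth 1 w 0))).
  { eapply computable_op_ext.
    - apply computable_op_app2 with (P := fun n m => primrec (fun _ => 0) (fun w => nth 0 w 0) n [m]);
        [apply computable_op_primrec; [apply computable_op_const | apply computable_op_proj]
        | apply (computable_op_proj 1) | apply (computable_op_proj 1)].
    - intro w; simpl; now destruct (nth 1 w 0). }
  intros HG HH; eapply computable_op_ext.
  - apply computable_op_app2 with (P := fun n m => primrec (fun w => nth 0 w 0)
                                             (fun w => pred (nth 1 w 0)) n [m]);
      [apply computable_op_primrec; [apply computable_op_proj | exact Hpred] | exact HH | exact HG].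
  - intro v; cbv beta; generalize (H v); induction n; simpl; lia.
Qed.

Lemma computable_op_pow2 G : computable_op G -> computable_op (fun v => 2 ^ G v).
Proof.
  intros HG.
  assert (Hpow : computable_op (binop (fun n _ => 2 ^ n))).
  { eapply computable_op_ext.
    - apply (computable_op_primrec (fun _ => 1) (fun w => nth 1 w 0 + nth 1 w 0));
        [apply computable_op_const | apply computable_op_add; apply computable_op_proj].
    - intro v; unfold binop; generalize (nth 0 v 0); induction n; simpl; lia. }
  exact (computable_op_app2 _ _ _ Hpow HG HG).
Qed.

Ltac computability :=
  repeat first
    [ apply computable_op_proj | apply computable_op_const | apply computable_op_succ
    | apply computable_op_pow2 | apply computable_op_add | apply computable_op_mul
    | apply computable_op_sub | apply computable_op_app; [assumption |] ].

Lemma computable_fun_op f : computable_op (fun v => f (nth 0 v 0)) -> computable_fun f.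
Proof. intros [c Hc]; exists c; intro n; apply (Hc [n]). Qed.

Fixpoint rec_nat (a : nat) (g : nat -> nat -> nat) (n : nat) : nat :=
  match n with 0 => a | S n' => g n' (rec_nat a g n') end.

Lemma computable_rec_nat a g : computable_op (binop g) -> computable_fun (rec_nat a g).
Proof.
  intros Hg; apply computable_fun_op.
  eapply computable_op_ext.
  - apply computable_op_app2;
      [apply (computable_op_primrec (fun _ => a) (binop g)); [apply computable_op_const | exact Hg]
      | apply (computable_op_proj 0) | apply (computable_op_proj 1)].
  - intro v; cbv beta; generalize (nth 0 v 0) (nth 1 v 0); intros n y.
    induction n as [|n IH]; simpl; auto.
    unfold binop at 1; simpl; now rewrite IH.
Qed.

Lemma computable_op_mu F : computable_op F -> (forall v, exists m, F (m :: v) = 0) ->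
  exists M, computable_op M /\ forall v, F (M v :: v) = 0.
Proof.
  intros [c Hc] Hex.
  set (least v := epsilon_smallest (fun m => F (m :: v) = 0) (fun m => Nat.eq_dec _ 0) (Hex v)).
  exists (fun v => proj1_sig (least v)); split.
  - exists (CMu c); intro v; destruct (least v) as [n [Hn Hmin]]; simpl.
    constructor.
    + rewrite <- Hn; apply Hc.
    + intros m Hm; destruct (F (m :: v)) as [|k] eqn:E.
      * specialize (Hmin m E); lia.
      * exists k; rewrite <- E; apply Hc.
  - intro v; exact (proj1 (proj2_sig (least v))).
Qed.

Lemma computable_increasing_witnesses (T : nat -> nat -> nat) :
  computable_op (binop T) -> (forall k lo, exists j, T k (lo + j) = 0) ->
  exists h, computable_fun h /\ increasing_nat_fun h /\ forall n, T n (h n) = 0.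
Proof.
  intros HT Hex.
  destruct (computable_op_mu (fun v => T (nth 1 v 0) (nth 2 v 0 + nth 0 v 0))) as [M [HM HMzero]].
  { apply computable_op_app2; [exact HT | computability ..]. }
  { intro v; simpl; apply Hex. }
  set (next k lo := lo + M [k; lo]).
  assert (Hnext : forall k lo, lo <= next k lo /\ T k (next k lo) = 0).
  { intros k lo; split; [unfold next; lia | apply (HMzero [k; lo])]. }
  assert (Hnext_c : computable_op (binop next)).
  { apply computable_op_add; [computability | apply computable_op_comp2; [exact HM | computability ..]]. }
  exists (rec_nat (next 0 0) (fun n y => next (S n) (S y))); split; [|split].
  - apply computable_rec_nat, computable_op_app2; [exact Hnext_c | computability ..].
  - intro n; simpl; destruct (Hnext (S n) (S (rec_nat (next 0 0) (fun n y => next (S n) (S y)) n))); lia.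
  - intros [|n]; apply Hnext.
Qed.

Lemma computable_increasing_majorant f : computable_fun f ->
  exists G, computable_fun G /\ increasing_nat_fun G /\ forall k, f k <= G k.
Proof.
  intros Hf; exists (rec_nat (f 0) (fun n y => y + f (S n) + 1)); split; [|split].
  - apply computable_rec_nat; unfold binop; computability.
  - intro n; simpl; lia.
  - intros [|k]; simpl; lia.
Qed.

Lemma computable_rat_seq_reindex q s : computable_rat_seq q -> computable_fun s ->
  computable_rat_seq (fun n => q (s n)).
Proof.
  intros [a [b [c [Ha [Hb [Hc Hq]]]]]] Hs.
  exists (fun n => a (s n)), (fun n => b (s n)), (fun n => c (s n)).
  repeat split; try (intro n; apply Hq); apply computable_fun_op; computability.
Qed.

Open Scope R_scope.

Lemma INR_nat_distance (u w : nat) : INR ((u - w) + (w - u))%nat = Rabs (INR u - INR w).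
Proof.
  destruct (Nat.le_ge_cases u w) as [H|H].
  - replace (u - w)%nat with 0%nat by lia. rewrite Nat.add_0_l, minus_INR by lia.
    apply le_INR in H. rewrite Rabs_left1; lra.
  - replace (w - u)%nat with 0%nat by lia. rewrite Nat.add_0_r, minus_INR by lia.
    apply le_INR in H. rewrite Rabs_right; lra.
Qed.

Lemma rational_distance_test (a b c a' b' c' k : nat) :
  let u := (a * S c' + b' * S c)%nat in
  let w := (a' * S c + b * S c')%nat in
  Rabs ((INR a - INR b) / INR (S c) - (INR a' - INR b') / INR (S c')) < / 2 ^ k
  <-> (((u - w) + (w - u)) * 2 ^ k < S c * S c')%nat.
Proof.
  intros u w.
  assert (Hc : 0 < INR (S c)) by (apply lt_0_INR; lia).
  assert (Hc' : 0 < INR (S c')) by (apply lt_0_INR; lia).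
  assert (Hk : 0 < 2 ^ k) by (apply pow_lt; lra).
  replace ((INR a - INR b) / INR (S c) - (INR a' - INR b') / INR (S c'))
    with ((INR u - INR w) / (INR (S c) * INR (S c')))
    by (unfold u, w; rewrite !plus_INR, !mult_INR; field; lra).
  set (D := INR (S c) * INR (S c')).
  assert (HD : 0 < D) by (unfold D; nra).
  unfold Rdiv; rewrite Rabs_mult, Rabs_inv, (Rabs_right D), <- INR_nat_distance by lra.
  assert (Hscale : forall A, A * / D < / 2 ^ k <-> A * 2 ^ k < D).
  { intro A; split; intro H.
    - apply (Rmult_lt_compat_r (D * 2 ^ k)) in H; [|nra].
      replace (A * / D * (D * 2 ^ k)) with (A * 2 ^ k) in H by (field; lra).
      replace (/ 2 ^ k * (D * 2 ^ k)) with D in H by (field; lra). exact H.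
    - apply (Rmult_lt_reg_r (D * 2 ^ k)); [nra|].
      replace (A * / D * (D * 2 ^ k)) with (A * 2 ^ k) by (field; lra).
      replace (/ 2 ^ k * (D * 2 ^ k)) with D by (field; lra). exact H. }
  rewrite Hscale; unfold D; rewrite <- !mult_INR, <- (pow_INR 2), <- mult_INR.
  split; [apply INR_lt | apply lt_INR].
Qed.

Lemma computable_closeness_test p q : computable_rat_seq p -> computable_rat_seq q ->
  exists T, computable_op (binop T) /\ forall k m, T k m = 0%nat <-> Rabs (p m - q m) < / 2 ^ k.
Proof.
  intros [a [b [c [Ha [Hb [Hc Hp]]]]]] [a' [b' [c' [Ha' [Hb' [Hc' Hq]]]]]].
  set (u m := (a m * S (c' m) + b' m * S (c m))%nat).
  set (w m := (a' m * S (c m) + b m * S (c' m))%nat).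
  exists (fun k m => S ((u m - w m + (w m - u m)) * 2 ^ k) - S (c m) * S (c' m))%nat; split.
  - unfold binop, u, w; computability.
  - intros k m; rewrite Hp, Hq, rational_distance_test; fold (u m) (w m); lia.
Qed.

Lemma computable_close_subsequence p q x : computable_rat_seq p -> computable_rat_seq q ->
  Un_cv p x -> Un_cv q x ->
  exists h, computable_fun h /\ increasing_nat_fun h /\ forall n, Rabs (p (h n) - q (h n)) < / 2 ^ n.
Proof.
  intros Hp Hq Hpx Hqx.
  destruct (computable_closeness_test p q Hp Hq) as [T [HT HTspec]].
  destruct (computable_increasing_witnesses T HT) as [h [Hh [Hhinc HhT]]].
  - intros k lo.
    assert (Heps : / 2 ^ k / 2 > 0) by (apply Rdiv_lt_0_compat; [apply Rinv_0_lt_compat, pow_lt|]; lra).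
    destruct (Hpx _ Heps) as [N1 HN1]; destruct (Hqx _ Heps) as [N2 HN2].
    exists (N1 + N2)%nat; apply HTspec.
    specialize (HN1 (lo + (N1 + N2))%nat ltac:(lia)); specialize (HN2 (lo + (N1 + N2))%nat ltac:(lia)).
    unfold Rdist in *.
    apply Rabs_def2 in HN1; apply Rabs_def2 in HN2; apply Rabs_def1; lra.
  - exists h; repeat split; auto; intro n; apply HTspec, HhT.
Qed.

Lemma increasing_nat_fun_le s : increasing_nat_fun s -> forall m n, (m <= n)%nat -> (s m <= s n)%nat.
Proof. intros Hs m n Hmn; induction Hmn; [lia | specialize (Hs m0); lia]. Qed.

Lemma increasing_nat_fun_lt s : increasing_nat_fun s -> forall m n, (m < n)%nat -> (s m < s n)%nat.
Proof. intros Hs m n Hmn; induction Hmn; [apply Hs | specialize (Hs m0); lia]. Qed.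

Lemma increasing_nat_fun_ge_id s : increasing_nat_fun s -> forall n, (n <= s n)%nat.
Proof. intros Hs n; induction n; [lia | specialize (Hs n); lia]. Qed.

Lemma increasing_nat_fun_bracket s : increasing_nat_fun s -> forall N j, (s N <= j)%nat ->
  exists n, (N <= n)%nat /\ (s n <= j < s (S n))%nat.
Proof.
  intros Hs N j Hj.
  assert (Hblock : forall d, (j < s (N + d))%nat -> exists n, (N <= n)%nat /\ (s n <= j < s (S n))%nat).
  { induction d as [|d IH]; intro Hd; [rewrite Nat.add_0_r in Hd; lia|].
    destruct (Nat.lt_ge_cases j (s (N + d)%nat)) as [Hlt|Hge]; [auto|].
    exists (N + d)%nat; rewrite Nat.add_succ_r in Hd; split; [lia | auto]. }
  apply (Hblock (S j)); pose proof (increasing_nat_fun_ge_id s Hs (N + S j)); lia.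
Qed.

Lemma increasing_seq_le (q : nat -> R) : increasing_seq q -> forall m n, (m <= n)%nat -> q m <= q n.
Proof. intros Hq m n Hmn; induction Hmn; [lra | specialize (Hq m0); lra]. Qed.

Lemma increasing_seq_below_limit (q : nat -> R) (x : R) : increasing_seq q -> Un_cv q x -> forall n, q n < x.
Proof.
  intros Hq Hx n; pose proof (Hq n).
  pose proof (growing_ineq q x (fun k => Rlt_le _ _ (Hq k)) Hx (S n)); lra.
Qed.

Lemma Un_cv_subsequence (q : nat -> R) (x : R) (s : nat -> nat) : Un_cv q x -> increasing_nat_fun s -> Un_cv (fun n => q (s n)) x.
Proof.
  intros Hx Hs eps Heps; destruct (Hx eps Heps) as [N HN]; exists N; intros n Hn.
  apply HN; pose proof (increasing_nat_fun_ge_id s Hs n); lia.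
Qed.

Lemma ratio_forces_gap (q : nat -> R) (x rho : R) (a b j : nat) : increasing_seq q -> Un_cv q x -> 0 <= rho ->
  (a <= j)%nat -> (S j <= b)%nat -> (x - q (S j)) / (x - q j) <= rho ->
  (1 - rho) * (x - q a) <= q b - q a.
Proof.
  intros Hq Hx Hrho Haj Hjb Hratio.
  assert (Hpos : 0 < x - q j) by (pose proof (increasing_seq_below_limit q x Hq Hx j); lra).
  assert (Hstep : x - q (S j) <= rho * (x - q j)).
  { apply (Rmult_le_compat_r (x - q j)) in Hratio; [|lra].
    unfold Rdiv in Hratio; rewrite Rmult_assoc, Rinv_l, Rmult_1_r in Hratio; lra. }
  pose proof (increasing_seq_le q Hq _ _ Haj); pose proof (increasing_seq_le q Hq _ _ Hjb).
  assert (rho * (x - q j) <= rho * (x - q a)) by (apply Rmult_le_compat_l; lra).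
  lra.
Qed.

Lemma increments_small (p q : nat -> R) (h f : nat -> nat) (k n : nat) :
  (forall n, Rabs (p (h n) - q (h n)) < / 2 ^ n) ->
  is_modulus (fun n => p (h (S n)) - p (h n)) 0 f ->
  (f k + k <= n)%nat -> q (h (S n)) - q (h n) < 3 / 2 ^ k.
Proof.
  intros Hclose Hmod Hn.
  assert (Hp : Rabs (0 - (p (h (S n)) - p (h n))) < / 2 ^ k) by (apply Hmod; lia).
  assert (Hn0 : / 2 ^ n <= / 2 ^ k) by (apply Rinv_le_contravar; [apply pow_lt | apply Rle_pow]; lra || lia).
  assert (Hn1 : / 2 ^ S n <= / 2 ^ k) by (apply Rinv_le_contravar; [apply pow_lt | apply Rle_pow]; lra || lia).
  pose proof (Hclose n) as Hc0; pose proof (Hclose (S n)) as Hc1.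
  apply Rabs_def2 in Hp; apply Rabs_def2 in Hc0; apply Rabs_def2 in Hc1.
  unfold Rdiv; lra.
Qed.

Lemma three_over_pow2_small (eps : R) : 0 < eps -> exists c, 3 / 2 ^ c < eps.
Proof.
  intros Heps.
  destruct (pow_lt_1_zero (/ 2) ltac:(rewrite Rabs_right; lra) (eps / 3) ltac:(lra)) as [c Hc].
  exists c; specialize (Hc c (le_n c)); rewrite pow_inv, Rabs_right in Hc.
  - unfold Rdiv in *; lra.
  - apply Rle_ge, Rlt_le, Rinv_0_lt_compat, pow_lt; lra.
Qed.

Lemma regaining_from_small_increments (q : nat -> R) (x rho : R) (h G : nat -> nat) :
  increasing_seq q -> Un_cv q x -> 0 <= rho < 1 ->
  (forall N, exists j, (N <= j)%nat /\ (x - q (S j)) / (x - q j) <= rho) ->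
  increasing_nat_fun h -> increasing_nat_fun G ->
  (forall k n, (G k <= n)%nat -> q (h (S n)) - q (h n) < (1 - rho) / 2 ^ k) ->
  forall N, exists k, (N <= k)%nat /\ x - q (h (G (S k))) < / 2 ^ k.
Proof.
  intros Hq Hx Hrho Hspeed Hh HG Hsmall N.
  destruct (Hspeed (h (G N))) as [j [Hj Hratio]].
  destruct (increasing_nat_fun_bracket h Hh (G N) j Hj) as [n [HnN [Hjlo Hjhi]]].
  destruct (increasing_nat_fun_bracket G HG N n HnN) as [k [HkN [Hnlo Hnhi]]].
  exists k; split; [exact HkN|].
  pose proof (ratio_forces_gap q x rho (h n) (h (S n)) j Hq Hx ltac:(lra) Hjlo Hjhi Hratio) as Hgap.
  pose proof (Hsmall k n Hnlo) as Hinc.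
  assert (Hsub : q (h n) <= q (h (G (S k)))).
  { apply increasing_seq_le; auto; apply increasing_nat_fun_le; auto; lia. }
  assert (Hbelow : (1 - rho) * (x - q (h n)) < (1 - rho) * / 2 ^ k) by (unfold Rdiv in Hinc; lra).
  apply Rmult_lt_reg_l in Hbelow; lra.
Qed.

Theorem theorem5p8 (x : R) :
  speedable x -> nearly_computable x -> regainingly_approximable x.
Proof.
  intros [_ [rho [Hrho [q [Hq [Hqinc [Hqx Hspeed]]]]]]] [p [Hp [Hpx Hnear]]].
  destruct (computable_close_subsequence p q x Hp Hq Hpx Hqx) as [h [Hh [Hhinc Hclose]]].
  destruct (Hnear h Hh Hhinc) as [_ [f [Hf Hmod]]].
  destruct (three_over_pow2_small (1 - rho) ltac:(lra)) as [c Hc].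
  destruct (computable_increasing_majorant (fun k => f (k + c) + (k + c))%nat) as [G [HG [HGinc HGmaj]]].
  { apply computable_fun_op; computability. }
  set (s k := h (G (S k))).
  assert (Hs : increasing_nat_fun s).
  { intro k; apply (increasing_nat_fun_lt h Hhinc), HGinc. }
  exists (fun k => q (s k)); split; [|split; [|split]].
  - apply computable_rat_seq_reindex; [exact Hq | apply computable_fun_op; unfold s; computability].
  - intro k; apply increasing_seq_le; [exact Hqinc | apply Nat.lt_le_incl, Hs].
  - exact (Un_cv_subsequence q x s Hqx Hs).
  - apply (regaining_from_small_increments q x rho h G); auto; [lra|].
    intros k n Hn.
    assert (Hinc : q (h (S n)) - q (h n) < 3 / 2 ^ (k + c)).
    { apply (increments_small p q h f); auto; pose proof (HGmaj k); lia. }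
    assert (Hk : 0 < / 2 ^ k) by (apply Rinv_0_lt_compat, pow_lt; lra).
    replace (3 / 2 ^ (k + c)) with (3 / 2 ^ c * / 2 ^ k) in Hinc
      by (rewrite pow_add; field; split; apply pow_nonzero; lra).
    unfold Rdiv in *; nra.
Qed.
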